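(* Fix $\alpha,\beta\in(0,1)$ and $c>0$. There exist constants $K,c_1,c_2>0$ depending only on $\alpha,\beta,c$ such that the following holds for the decoupled process with parameters $(G,r,T,\alpha,\beta)$ at any time $t>0$. Let $u,v$ be nodes with $d_G(r,u),d_G(r,v)\le t$, let $w$ be their least common ancestor in $T$ (a common ancestor, possibly $u$ or $v$ itself, of maximal depth), $D=d_T(r,w)$, and $\delta=\max\{d_T(w,u),d_T(w,v)\}$. If $\delta>\beta(t-D)+K(t-D)^{0.5+c}$, then $$\Pr[\mathrm{origin}_t(u)=\mathrm{origin}_t(v)]\le e^{-c_1(t-D)^{c_2}}.$$
   Context: Decoupled process. Fix $\alpha,\beta\in[0,1]$, a connected locally finite undirected graph $G$, root $r$, and a BFS spanning tree $T$ of $G$ rooted at $r$ ($d_T(r,v)=d_G(r,v)$), oriented away from $r$, with parent map $p$. Let $Z_0=+1$, $Z_1,Z_2,\dots$ i.i.d. uniform on $\{-1,+1\}$, $Z_\infty=\bot$. Counter $\mathrm{count}_0=1$; $\mathrm{origin}_0(r)=0$ (and always $0$), $\mathrm{origin}_0(v)=\infty$ for $v\ne r$; $g_t(v)=Z_{\mathrm{origin}_t(v)}$. Update from $t$ to $t+1$ (independent choices): if $g_t(v)=g_t(p(v))=\bot$ then $\mathrm{origin}_{t+1}(v)=\infty$; nodes with $g_t(v)=\bot\ne g_t(p(v))$ are processed sequentially in a fixed order: w.p. $1-\alpha$, $\mathrm{origin}_{t+1}(v)=\mathrm{origin}_t(p(v))$; w.p. $\alpha$, $\mathrm{origin}_{t+1}(v)$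 is the current counter value and the counter is then incremented; if $g_t(v)\ne\bot$, $v\ne r$: w.p. $\beta$, $\mathrm{origin}_{t+1}(v)=\mathrm{origin}_t(p(v))$, otherwise unchanged. Nodes $u,v$ are in the same run at time $t$ iff $\mathrm{origin}_t(u)=\mathrm{origin}_t(v)$. *)

From HB Require Import structures.
From mathcomp Require Import all_boot all_order all_algebra.
From mathcomp Require Import reals sequences exp.
Set Implicit Arguments. Unset Strict Implicit. Unset Printing Implicit Defensive.
Import Order.TTheory GRing.Theory Num.Theory.
Local Open Scope ring_scope.

(* A locally finite undirected graph on V is given by finite adjacency
   lists [nbr x]; undirectedness is the symmetry hypothesis [undirected]. *)
Definition undirected (V : eqType) (nbr : V -> seq V) : Prop :=
  forall x y : V, (y \in nbr x) = (x \in nbr y).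

Definition adj (V : eqType) (nbr : V -> seq V) : rel V := fun x y => y \in nbr x.

Definition gdist (V : eqType) (nbr : V -> seq V) (r v : V) (n : nat) : Prop :=
  (exists s : seq V, [/\ path (adj nbr) r s, last r s = v & size s = n]) /\
  (forall s : seq V, path (adj nbr) r s -> last r s = v -> (n <= size s)%N).

(* In the tree T given by the parent map p (convention p r = r), a is an
   ancestor of x (possibly x itself). *)
Definition anc (V : eqType) (p : V -> V) (a x : V) : Prop :=
  exists n : nat, iter n p x = a.

Definition tdist (V : eqType) (p : V -> V) (a x : V) (n : nat) : Prop :=
  iter n p x = a /\ (forall m : nat, (m < n)%N -> iter m p x <> a).

Definition bfs_tree (V : eqType) (nbr : V -> seq V) (r : V) (p : V -> V) : Prop :=
  [/\ p r = r,
      (forall v, v != r -> p v \in nbr v) &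
      (forall v, exists n, tdist p r v n /\ gdist nbr r v n)].

Definition is_lca (V : eqType) (r : V) (p : V -> V) (u v w : V) : Prop :=
  [/\ anc p w u, anc p w v &
      forall a da dw, anc p a u -> anc p a v -> tdist p r a da -> tdist p r w dw ->
        (da <= dw)%N].

(* origin : V -> option nat, with None = infinity (so g_t(v) = Z_{origin} is
   bot iff origin = None; the +-1 values of Z never influence origins).
   A state is (origin, counter, S) where S lists the nodes with origin <> None. *)
Definition state (V : eqType) := ((V -> option nat) * nat * seq V)%type.

Definition upd (V : eqType) (f : V -> option nat) (v : V) (x : option nat) :=
  fun y => if y == v then x else f y.

Section Process.
Variables (R : realType) (alpha beta : R) (V : eqType)
          (nbr : V -> seq V) (r : V) (p : V -> V) (rank : V -> nat).

(* Process the nodes of L sequentially; o is the (old) origin function at time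
   t, acc = (new origin function being built, current counter). Returns the
   weighted list of outcomes. *)
Fixpoint proc (o : V -> option nat) (L : seq V)
    (acc : (V -> option nat) * nat) : seq (R * ((V -> option nat) * nat)) :=
  match L with
  | [::] => [:: (1, acc)]
  | v :: L' =>
    let f := acc.1 in let c := acc.2 in
    if o v == None then
      (* g_t(v) = bot <> g_t(p v) *)
      [seq ((1 - alpha) * ws.1, ws.2) | ws <- proc o L' (upd f v (o (p v)), c)] ++
      [seq (alpha * ws.1, ws.2) | ws <- proc o L' (upd f v (Some c), c.+1)]
    else
      (* g_t(v) <> bot, v <> r *)
      [seq (beta * ws.1, ws.2) | ws <- proc o L' (upd f v (o (p v)), c)] ++
      [seq ((1 - beta) * ws.1, ws.2) | ws <- proc o L' (f, c)]
  end.

Definition newborns (o : V -> option nat) (S : seq V) : seq V :=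
  sort (fun x y => (rank x <= rank y)%N)
    (undup [seq y <- flatten (map nbr S) |
            [&& y != r, o y == None & o (p y) != None]]).

Definition step (st : state V) : seq (R * state V) :=
  let: (o, c, Sl) := st in
  let N := newborns o Sl in
  [seq (ws.1, (ws.2.1, ws.2.2, Sl ++ N)) |
     ws <- proc o (N ++ [seq x <- Sl | x != r]) (o, c)].

Definition init_state : state V :=
  (fun v => if v == r then Some 0%N else None, 1%N, [:: r]).

Fixpoint dist (t : nat) : seq (R * state V) :=
  match t with
  | 0 => [:: (1, init_state)]
  | t'.+1 => flatten [seq [seq (ws.1 * ws'.1, ws'.2) | ws' <- step ws.2]
                     | ws <- dist t']
  end.

Definition origin (st : state V) : V -> option nat := st.1.1.

Definition prob (t : nat) (E : state V -> bool) : R :=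
  \sum_(ws <- dist t) (if E ws.2 then ws.1 else 0).

End Process.

From Pilot Require Import Defs.
From HB Require Import structures.
From mathcomp Require Import all_boot all_order all_algebra.
From mathcomp Require Import reals sequences exp.
From Stdlib Require List.
From mathcomp Require Import ring lra zify.
Import Order.TTheory GRing.Theory Num.Theory.
Local Open Scope ring_scope.
Set Implicit Arguments. Unset Strict Implicit. Unset Printing Implicit Defensive.

(* Labels created after time D are confined to single subtrees rooted
   at depth D + 1, so a label shared by u and v is "old" (created before time
   D), and it must have travelled down the whole spine from w to the deeper of
   u, v.  Let h be the deepest spine index carrying an old label.  In one
   step h grows by at most one, and only if the next spine node copies its
   parent's label: with probability at most beta behind the labelling
   frontier and at most 1 - alpha at the frontier.  Hence lam ^ h / mu ^ k,
   doubled at the frontier, is a supermartingale for suitable lam >= 1 and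
   mu (k = time since D), and Markov's inequality bounds the probability
   that h = delta at time t by 2 mu ^ (t - D) / lam ^ delta.  Choosing
   lam = 1 / (1 - eps) with eps = alpha / (4 sqrt (t - D)) gives the bound. *)

(* Distributions are
   represented, as in [Defs.dist], by lists of (weight, outcome) pairs; the
   outcome type (functions V -> option nat) has no decidable equality, which
   is why membership is the propositional [List.In]. *)
Section Expectation.
Variable R : realType.

Definition Ex (T : Type) (l : seq (R * T)) (G : T -> R) : R :=
  \sum_(ws <- l) ws.1 * G ws.2.

Lemma Ex1 (T : Type) (x : T) (G : T -> R) : Ex [:: (1, x)] G = G x.
Proof. by rewrite /Ex big_seq1 mul1r. Qed.

Lemma Ex_cat T (l1 l2 : seq (R * T)) G : Ex (l1 ++ l2) G = Ex l1 G + Ex l2 G.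
Proof. by rewrite /Ex big_cat. Qed.

Lemma Ex_scale T (l : seq (R * T)) a G :
  Ex [seq (a * ws.1, ws.2) | ws <- l] G = a * Ex l G.
Proof. by rewrite /Ex big_map mulr_sumr; apply: eq_bigr => ws _ /=; rewrite mulrA. Qed.

Lemma Ex_bind T U (l : seq (R * T)) (f : T -> seq (R * U)) G :
  Ex (flatten [seq [seq (ws.1 * ws'.1, ws'.2) | ws' <- f ws.2] | ws <- l]) G
  = Ex l (fun x => Ex (f x) G).
Proof.
rewrite /Ex big_flatten big_map; apply: eq_bigr => ws _.
exact: (Ex_scale (f ws.2) ws.1 G).
Qed.

Lemma In_bind T U (l : seq (R * T)) (f : T -> seq (R * U)) ws :
  List.In ws (flatten [seq [seq (w.1 * w'.1, w'.2) | w' <- f w.2] | w <- l]) ->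
  exists w w', [/\ List.In w l, List.In w' (f w.2) & ws = (w.1 * w'.1, w'.2)].
Proof.
elim: l => [|w l IH] //= hin; case: (List.in_app_or _ _ _ hin).
  by case/(List.in_map_iff _ _ _) => w' [<- h]; exists w, w'; split => //; left.
by case/IH => w0 [w' [h1 h2 h3]]; exists w0, w'; split => //; right.
Qed.

Lemma In_cat_map T (a b : R) (l1 l2 : seq (R * T)) ws :
  List.In ws ([seq (a * x.1, x.2) | x <- l1] ++ [seq (b * x.1, x.2) | x <- l2]) ->
  exists x, (List.In x l1 /\ ws = (a * x.1, x.2)) \/ (List.In x l2 /\ ws = (b * x.1, x.2)).
Proof.
move=> hin; case: (List.in_app_or _ _ _ hin) => /(List.in_map_iff _ _ _) [x [<- hx]];
  exists x; by [left|right].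
Qed.

Lemma ExZ T (l : seq (R * T)) a G : Ex l (fun x => a * G x) = a * Ex l G.
Proof. by rewrite /Ex mulr_sumr; apply: eq_bigr => ws _; rewrite mulrCA. Qed.

Lemma Ex_affine T (l : seq (R * T)) a b G :
  Ex l (fun x => a + b * G x) = a * Ex l (fun _ => 1) + b * Ex l G.
Proof. by rewrite /Ex !mulr_sumr -big_split; apply: eq_bigr => ws _ /=; ring. Qed.

Lemma Ex_const T (l : seq (R * T)) a : Ex l (fun _ => a) = a * Ex l (fun _ => 1).
Proof. by rewrite -ExZ; apply: eq_bigr => ws _; rewrite mulr1. Qed.

Lemma Ex_le T (l : seq (R * T)) G H :
  (forall ws, List.In ws l -> 0 <= ws.1) ->
  (forall ws, List.In ws l -> G ws.2 <= H ws.2) -> Ex l G <= Ex l H.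
Proof.
elim: l => [|x l IH] h0 h; first by rewrite /Ex !big_nil.
rewrite /Ex !big_cons; apply: lerD.
  by apply: ler_wpM2l; [apply: h0|apply: h]; left.
by apply: IH => ws hin; [apply: h0|apply: h]; right.
Qed.

Lemma Ex_eq T (l : seq (R * T)) G H :
  (forall ws, List.In ws l -> G ws.2 = H ws.2) -> Ex l G = Ex l H.
Proof.
elim: l => [|x l IH] h; first by rewrite /Ex !big_nil.
rewrite /Ex !big_cons h; last by left.
by congr (_ + _); apply: IH => ws hin; apply: h; right.
Qed.

End Expectation.

Section Kernel.
Variables (R : realType) (alpha beta : R) (V : eqType) (p : V -> V).
Hypothesis ha : 0 <= alpha <= 1.
Hypothesis hb : 0 <= beta <= 1.

Local Notation proc := (proc alpha beta p).

Lemma Ex_proc_cons o v L f c G :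
  Ex (proc o (v :: L) (f, c)) G =
  if o v == None then
    (1 - alpha) * Ex (proc o L (upd f v (o (p v)), c)) G +
    alpha * Ex (proc o L (upd f v (Some c), c.+1)) G
  else
    beta * Ex (proc o L (upd f v (o (p v)), c)) G +
    (1 - beta) * Ex (proc o L (f, c)) G.
Proof. by rewrite /=; case: ifP => _; rewrite Ex_cat !Ex_scale. Qed.

Lemma proc_ge0 o L acc ws : List.In ws (proc o L acc) -> 0 <= ws.1.
Proof.
have /andP[a0 a1] := ha; have /andP[b0 b1] := hb.
elim: L acc ws => [|v L IH] [f c] ws /=; first by case=> // <-.
case: ifP => _; move=> /In_cat_map [ws' [[/IH h ->]|[/IH h ->]]] /=;
  apply: mulr_ge0 => //; by rewrite subr_ge0.
Qed.

Lemma proc_sum1 o L acc : Ex (proc o L acc) (fun _ => 1) = 1.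
Proof.
elim: L acc => [|v L IH] [f c]; first by rewrite Ex1.
by rewrite Ex_proc_cons !IH !mulr1; case: ifP => _; ring.
Qed.

Lemma proc_notin o L acc y ws :
  y \notin L -> List.In ws (proc o L acc) -> ws.2.1 y = acc.1 y.
Proof.
elim: L acc ws => [|v L IH] [f c] ws /=; first by move=> _ [] // <-.
rewrite inE negb_or => /andP[yv yL].
have hupd x : upd f v x y = f y by rewrite /upd (negbTE yv).
case: ifP => _; move=> /In_cat_map [ws' [[/(IH _ _ yL) h ->]|[/(IH _ _ yL) h ->]]] /=;
  by rewrite h //= ?hupd.
Qed.

Lemma proc_in o L f c y ws : uniq L -> y \in L -> List.In ws (proc o L (f, c)) ->
  if o y == None then ws.2.1 y = o (p y) \/ (exists a, ws.2.1 y = Some a /\ (c <= a)%N)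
  else ws.2.1 y = o (p y) \/ ws.2.1 y = f y.
Proof.
elim: L f c ws => [|v L IH] f c ws //= /andP[vL uL].
rewrite inE => /orP[/eqP yv|yL].
  subst y.
  have hn acc ws' : List.In ws' (proc o L acc) -> ws'.2.1 v = acc.1 v.
    exact: proc_notin.
  case: ifP => ov; move=> /In_cat_map [ws' [[/hn h ->]|[/hn h ->]]] /=;
    rewrite h /= ?/upd ?eqxx /=; first [by left | by right; exists c | by right].
have yv : y != v by apply: contraNneq vL => <-.
have hupd x : upd f v x y = f y by rewrite /upd (negbTE yv).
case: ifP => ov; move=> /In_cat_map [ws' [[h ->]|[h ->]]] /=;
  move: (IH _ _ _ uL yL h); rewrite ?hupd //.
case: ifP => // _ [->|[a [-> ca]]]; [by left| by right; exists a; split => //; apply: ltnW].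
Qed.

Lemma proc_fresh o L f c c0 ws :
  (c0 <= c)%N ->
  (forall y a, o y = Some a -> (a < c0)%N) ->
  (forall y a, f y = Some a -> (a < c)%N) ->
  (forall y y' a, f y = Some a -> f y' = Some a -> (c0 <= a)%N -> y = y') ->
  List.In ws (proc o L (f, c)) ->
  [/\ (c <= ws.2.2)%N,
      (forall y a, ws.2.1 y = Some a -> (a < ws.2.2)%N) &
      (forall y y' a, ws.2.1 y = Some a -> ws.2.1 y' = Some a -> (c0 <= a)%N -> y = y')].
Proof.
elim: L f c ws => [|v L IH] f c ws c0c ho hf hu /=; first by case=> // <-.
have hcopy c' : (c0 <= c')%N -> (forall y a, f y = Some a -> (a < c')%N) ->
   [/\ (forall y a, upd f v (o (p v)) y = Some a -> (a < c')%N) &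
   (forall y y' a, upd f v (o (p v)) y = Some a -> upd f v (o (p v)) y' = Some a ->
      (c0 <= a)%N -> y = y')].
  move=> c0c' hf'; split.
    move=> y a; rewrite /upd; case: ifP => _; last exact: hf'.
    by move/ho => h; apply: leq_trans h c0c'.
  move=> y y' a; rewrite /upd; case: ifP => _.
    by move/ho => h _ /(leq_trans h); rewrite ltnn.
  case: ifP => _; last exact: hu.
  by move=> _ /ho h /(leq_trans h); rewrite ltnn.
have [hc1 hc2] := hcopy c c0c hf.
have hfr1 y a : upd f v (Some c) y = Some a -> (a < c.+1)%N.
  rewrite /upd; case: ifP => _; first by case=> ->.
  by move/hf => h; apply: ltnW.
have hfr2 y y' a : upd f v (Some c) y = Some a -> upd f v (Some c) y' = Some a ->
      (c0 <= a)%N -> y = y'.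
  rewrite /upd; case: ifP => /eqP yv; case: ifP => /eqP y'v.
  - by rewrite yv y'v.
  - by case=> <- /hf; rewrite ltnn.
  - by move=> /hf h [] ha'; move: h; rewrite ha' ltnn.
  - exact: hu.
case: ifP => _; move=> /In_cat_map [ws' [[h ->]|[h ->]]] /=.
- exact: IH h.
- have [] := IH _ _ _ (leq_trans c0c (leqnSn c)) ho hfr1 hfr2 h.
  by move=> h1 h2 h3; split => //; apply: ltnW.
- exact: IH h.
- exact: IH h.
Qed.

Lemma proc_copy o L f c z :
  uniq L -> z \in L -> f z != o (p z) ->
  (forall y a, o y = Some a -> (a < c)%N) ->
  Ex (proc o L (f, c)) (fun acc => if acc.1 z == o (p z) then 1 else 0)
  <= (if o z == None then 1 - alpha else beta).
Proof.
have /andP[a0 a1] := ha; have /andP[b0 b1] := hb.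
elim: L f c => [|v L IH] f c //= /andP[vL uL].
rewrite Ex_proc_cons inE => /orP[/eqP zv|zL] fz ho.
  subst z.
  have hle acc : Ex (proc o L acc) (fun acc => if acc.1 v == o (p v) then 1 else 0) <= 1.
    rewrite -[X in _ <= X](proc_sum1 o L acc).
    apply: Ex_le => [ws|ws _]; first exact: proc_ge0.
    by case: ifP => _; rewrite ?lexx ?ler01.
  have h0 acc : acc.1 v != o (p v) ->
      Ex (proc o L acc) (fun acc => if acc.1 v == o (p v) then 1 else 0) = 0.
    move=> hacc; rewrite (@Ex_eq _ _ _ _ (fun _ => 0)).
      by rewrite /Ex big1 // => ws _; rewrite mulr0.
    by move=> ws hin; rewrite (proc_notin vL hin) (negbTE hacc).
  case: ifP => ov.
    rewrite [X in alpha * X]h0 /=; last first.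
      rewrite /upd eqxx; case e: (o (p v)) => [a|] //.
      by apply/eqP => -[ac]; move: (ho _ _ e); rewrite ac ltnn.
    by rewrite mulr0 addr0 -[X in _ <= X]mulr1 ler_wpM2l ?subr_ge0.
  by rewrite [X in (1 - beta) * X]h0 // mulr0 addr0 -[X in _ <= X]mulr1 ler_wpM2l.
have zv : z != v by apply: contraNneq vL => <-.
have hupd x : upd f v x z = f z by rewrite /upd (negbTE zv).
have ho' y a : o y = Some a -> (a < c.+1)%N by move/ho/ltnW.
set q := if o z == None then 1 - alpha else beta.
case: ifP => _.
  apply: le_trans (_ : (1 - alpha) * q + alpha * q <= _); last by rewrite -mulrDl subrK mul1r.
  by apply: lerD; apply: ler_wpM2l; rewrite ?subr_ge0 //; apply: IH => //; rewrite hupd.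
apply: le_trans (_ : beta * q + (1 - beta) * q <= _); last by rewrite -mulrDl addrC subrK mul1r.
by apply: lerD; apply: ler_wpM2l; rewrite ?subr_ge0 //; apply: IH => //; rewrite hupd.
Qed.

End Kernel.

Section Depth.
Variables (V : eqType) (r : V) (p : V -> V).
Hypothesis hpr : p r = r.
Hypothesis hex : forall y, exists n, iter n p y == r.

Definition depth y : nat := ex_minn (hex y).

Lemma depth_iter y : iter (depth y) p y = r.
Proof. by rewrite /depth; case: ex_minnP => n /eqP. Qed.

Lemma depth_min y n : iter n p y = r -> (depth y <= n)%N.
Proof. by rewrite /depth; case: ex_minnP => m _ h /eqP /h. Qed.

Lemma iter_root n : iter n p r = r.
Proof. by elim: n => //= n ->. Qed.

Lemma depth_root : depth r = 0%N.
Proof. by apply/eqP; rewrite -leqn0; apply: depth_min. Qed.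

Lemma depth0 y : depth y = 0%N -> y = r.
Proof. by move=> h; have := depth_iter y; rewrite h. Qed.

Lemma depth_p y : y != r -> depth y = (depth (p y)).+1.
Proof.
move=> yr; apply/eqP; rewrite eqn_leq; apply/andP; split.
  by apply: depth_min; rewrite iterSr depth_iter.
case e: (depth y) => [|d]; first by move/depth0: e => /eqP; rewrite (negbTE yr).
by apply: depth_min; rewrite -iterSr -e depth_iter.
Qed.

Lemma depth_pB y : depth (p y) = (depth y).-1.
Proof.
case: (eqVneq y r) => [->|yr]; first by rewrite hpr depth_root.
by rewrite (depth_p yr).
Qed.

Lemma depth_p_le y : (depth (p y) <= depth y)%N.
Proof. by rewrite depth_pB leq_pred. Qed.

Lemma depth_iterp k y : depth (iter k p y) = (depth y - k)%N.
Proof.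
elim: k => [|k IH]; first by rewrite subn0.
by rewrite iterS depth_pB IH subnS.
Qed.

Lemma tdist_depth y n : tdist p r y n -> n = depth y.
Proof.
case=> h hmin; apply/eqP; rewrite eqn_leq depth_min // andbT.
rewrite leqNgt; apply/negP => lt; exact: (hmin _ lt (depth_iter y)).
Qed.

Lemma tdist_depthP y : tdist p r y (depth y).
Proof.
split; first exact: depth_iter.
by move=> m lt h; have := depth_min h; rewrite leqNgt lt.
Qed.

Lemma tdist_anc a y d : tdist p a y d -> depth y = (depth a + d)%N /\ iter d p y = a.
Proof.
case=> h hmin; split => //.
have dle : (d <= depth y)%N.
  rewrite leqNgt; apply/negP => lt.
  have ha : a = r by rewrite -h -(subnK (ltnW lt)) iterD depth_iter iter_root.
  by apply: (hmin _ lt); rewrite ha depth_iter.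
by rewrite -h depth_iterp subnK.
Qed.

Definition anc_at k y := iter (depth y - k) p y.

Lemma depth_anc_at k y : (k <= depth y)%N -> depth (anc_at k y) = k.
Proof. by move=> h; rewrite /anc_at depth_iterp subKn. Qed.

Lemma anc_at_p k y : y != r -> (k <= depth (p y))%N -> anc_at k y = anc_at k (p y).
Proof. by move=> yr h; rewrite /anc_at (depth_p yr) subSn // iterSr. Qed.

End Depth.

Section OneStep.
Variables (R : realType) (alpha beta : R) (V : eqType) (nbr : V -> seq V) (r : V)
          (p : V -> V) (rank : V -> nat).
Hypothesis ha : 0 <= alpha <= 1.
Hypothesis hb : 0 <= beta <= 1.
Hypothesis hund : undirected nbr.
Hypothesis hpr : p r = r.
Hypothesis hpn : forall v, v != r -> p v \in nbr v.
Hypothesis hex : forall y, exists n, iter n p y == r.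

Local Notation dep := (depth hex).
Local Notation step := (step alpha beta nbr r p rank).
Local Notation proc := (proc alpha beta p).
Local Notation newborns := (newborns nbr r p rank).

Definition Inv (s : nat) (st : state V) : Prop :=
  [/\ uniq st.2, (forall y, (y \in st.2) = (st.1.1 y != None)),
      (forall y, (st.1.1 y != None) = (dep y <= s)%N) &
      (forall y a, st.1.1 y = Some a -> (a < st.1.2)%N)].

Lemma Inv0 : Inv 0 (init_state r).
Proof.
split => //= [y|y|y a].
- by rewrite inE; case: (eqVneq y r).
- case: (eqVneq y r) => [->|yr]; first by rewrite depth_root.
  by rewrite leqn0; apply/esym/negP => /eqP /depth0 /eqP; rewrite (negbTE yr).
- by case: (eqVneq y r) => // _ [<-].
Qed.

Lemma mem_newborns o Sl y : (y \in newborns o Sl) =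
  [&& y \in flatten [seq nbr i | i <- Sl], y != r, o y == None & o (p y) != None].
Proof. by rewrite /Defs.newborns mem_sort mem_undup mem_filter andbC. Qed.

(* Because T is a BFS tree and G is undirected, the nodes labelled in a step
   at time s are exactly those of depth s + 1. *)
Lemma newborns_depth s o c Sl y : Inv s (o, c, Sl) ->
  (y \in newborns o Sl) = (dep y == s.+1).
Proof.
case=> /= _ hS hD _; rewrite mem_newborns.
apply/idP/idP.
  case/and4P => _ yr oy opy.
  rewrite hD in opy.
  have ny : ~~ (dep y <= s)%N by rewrite -hD negbK.
  rewrite eqn_leq (depth_p hex yr) ltnS opy /=.
  by rewrite -(depth_p hex yr) ltnNge.
move/eqP => dy.
have yr : y != r by apply/eqP => yr; move: dy; rewrite yr depth_root.
have dpy : dep (p y) = s by move: dy; rewrite (depth_p hex yr) => -[].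
apply/and4P; split => //.
- apply/flatten_mapP; exists (p y); first by rewrite hS hD dpy.
  by rewrite hund hpn.
- by rewrite -[_ == _]negbK hD dy ltnn.
- by rewrite hD dpy.
Qed.

Definition stepL o Sl := newborns o Sl ++ [seq x <- Sl | x != r].

Lemma stepL_uniq s o c Sl : Inv s (o, c, Sl) -> uniq (stepL o Sl).
Proof.
move=> hI; have [/= hu hS _ _] := hI.
rewrite /stepL cat_uniq filter_uniq // andbT sort_uniq undup_uniq /=.
apply/hasPn => x; rewrite mem_filter => /andP[_ xS].
by rewrite hS in xS; rewrite mem_newborns (negbTE xS) !andbF.
Qed.

Lemma In_step st ws : List.In ws (step st) ->
  exists ws', List.In ws' (proc st.1.1 (stepL st.1.1 st.2) (st.1.1, st.1.2)) /\
    ws = (ws'.1, (ws'.2.1, ws'.2.2, st.2 ++ newborns st.1.1 st.2)).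
Proof.
case: st => [[o c] Sl] /= /(List.in_map_iff _ _ _) [ws' [<- h]].
by exists ws'.
Qed.

Lemma Ex_step st G : Ex (step st) G =
  Ex (proc st.1.1 (stepL st.1.1 st.2) (st.1.1, st.1.2))
     (fun x => G (x.1, x.2, st.2 ++ newborns st.1.1 st.2)).
Proof. by case: st => [[o c] Sl]; rewrite /= /Ex big_map. Qed.

Lemma step_ge0 st ws : List.In ws (step st) -> 0 <= ws.1.
Proof. by case/In_step => ws' [h ->]; exact: (proc_ge0 ha hb h). Qed.

Lemma step_sum1 st : Ex (step st) (fun _ => 1) = 1.
Proof. by rewrite Ex_step; apply: proc_sum1. Qed.

Lemma step_char s st ws : Inv s st -> List.In ws (step st) ->
  [/\ (st.1.2 <= ws.2.1.2)%N,
      (forall y, ws.2.1.1 y = st.1.1 y \/ (y != r /\ ws.2.1.1 y = st.1.1 (p y)) \/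
                 (st.1.1 y = None /\ exists a, ws.2.1.1 y = Some a /\ (st.1.2 <= a)%N)),
      (forall y a, ws.2.1.1 y = Some a -> (a < ws.2.1.2)%N) &
      (forall y y' a, ws.2.1.1 y = Some a -> ws.2.1.1 y' = Some a -> (st.1.2 <= a)%N -> y = y')].
Proof.
case: st => [[o c] Sl] hI /In_step [ws' [hin ->]] /=.
have [_ _ _ hc] := hI.
have hu0 y y' a : o y = Some a -> o y' = Some a -> (c <= a)%N -> y = y'.
  by move/hc => h _ /(leq_trans h); rewrite ltnn.
have [h1 h2 h3] := proc_fresh (leqnn c) hc hc hu0 hin.
split => // y.
case: (boolP (y \in stepL o Sl)) => yL; last by left; rewrite (proc_notin yL hin).
have := proc_in (stepL_uniq hI) yL hin.
have yr : y != r.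
  by move: yL; rewrite mem_cat mem_filter mem_newborns => /orP[/and4P[]|/andP[]].
case: ifP => [/eqP oy|_] [h|h].
- by right; left.
- by right; right.
- by right; left.
- by left.
Qed.

Lemma step_inv s st ws : Inv s st -> List.In ws (step st) -> Inv s.+1 ws.2.
Proof.
case: st => [[o c] Sl] hI hin.
have [hc hch hv _] := step_char hI hin.
have [/= hu hS hD hc0] := hI.
case/In_step: (hin) => ws' [hin' ews]; rewrite /= in hin'; rewrite ews /=.
set N := newborns o Sl.
have hN y : (y \in N) = (dep y == s.+1) by apply: newborns_depth hI.
have hNo y : y \in N -> o y = None /\ o (p y) != None.
  by rewrite mem_newborns => /and4P[_ _ /eqP -> ->].
have hpd y : o y != None -> o (p y) != None.
  by rewrite !hD => h; apply: leq_trans h; apply: depth_p_le.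
have labelled y : (y \in Sl ++ N) = (ws'.2.1 y != None).
  case: (boolP (y \in stepL o Sl)) => yL.
    have := proc_in (stepL_uniq hI) yL hin'.
    rewrite mem_cat.
    case: ifP => [/eqP oy|oy].
      have yN : y \in N.
        by move: yL; rewrite mem_cat mem_filter hS oy /= andbF orbF.
      rewrite yN orbT => -[->|[a [-> _]]] //; by case: (hNo y yN).
    have yS : y \in Sl by rewrite hS oy.
    rewrite yS /= => -[->|->]; apply/esym; [by apply: hpd; rewrite oy| by rewrite oy].
  rewrite (proc_notin yL hin') /= mem_cat.
  have yN : y \notin N by apply: contra yL; rewrite mem_cat => ->.
  by rewrite (negbTE yN) orbF hS.
split => /=.
- rewrite cat_uniq hu /= sort_uniq undup_uniq andbT.
  apply/hasPn => x; rewrite mem_newborns hS => /and4P[_ _ /eqP -> _] //.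
- exact: labelled.
- move=> y; rewrite -labelled mem_cat hN hS hD.
  by rewrite [X in _ = X]leq_eqVlt ltnS orbC.
- by move=> y a; move: (hv y a); rewrite ews.
Qed.

End OneStep.

Section Runs.
Variables (R : realType) (alpha beta : R) (V : eqType) (nbr : V -> seq V) (r : V)
          (p : V -> V) (rank : V -> nat).
Hypothesis ha : 0 <= alpha <= 1.
Hypothesis hb : 0 <= beta <= 1.

Local Notation step := (step alpha beta nbr r p rank).

Fixpoint run (k : nat) (st : state V) : seq (R * state V) :=
  match k with
  | 0 => [:: (1, st)]
  | k'.+1 => flatten [seq [seq (ws.1 * ws'.1, ws'.2) | ws' <- step ws.2] | ws <- run k' st]
  end.

Lemma dist_run t : dist alpha beta nbr r p rank t = run t (init_state r).
Proof. by elim: t => //= t ->. Qed.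

Lemma Ex_run_S k st G : Ex (run k.+1 st) G = Ex (run k st) (fun s => Ex (step s) G).
Proof. by rewrite /= Ex_bind. Qed.

Lemma Ex_run_add a b st G :
  Ex (run (a + b) st) G = Ex (run a st) (fun s => Ex (run b s) G).
Proof.
elim: b G => [|b IH] G.
  by rewrite addn0; apply: Ex_eq => ws _; rewrite Ex1.
by rewrite addnS Ex_run_S IH; apply: Ex_eq => ws _; rewrite Ex_run_S.
Qed.

Lemma run_ge0 k st ws : List.In ws (run k st) -> 0 <= ws.1.
Proof.
elim: k ws => [|k IH] ws /=; first by case=> // <-.
case/In_bind => w [w' [h1 h2 ->]] /=.
by apply: mulr_ge0; [apply: IH | apply: (step_ge0 ha hb h2)].
Qed.

Lemma run_sum1 k st : Ex (run k st) (fun _ => 1) = 1.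
Proof.
elim: k => [|k IH]; first by rewrite Ex1.
by rewrite Ex_run_S -[RHS]IH; apply: Ex_eq => ws _; rewrite step_sum1.
Qed.

Lemma run_inv (P : nat -> state V -> Prop) s0 st k ws :
  (forall s st ws, (s0 <= s)%N -> P s st -> List.In ws (step st) -> P s.+1 ws.2) ->
  P s0 st -> List.In ws (run k st) -> P (s0 + k)%N ws.2.
Proof.
move=> hP h0; elim: k ws => [|k IH] ws /=; first by case=> // <-; rewrite addn0.
case/In_bind => w [w' [h1 h2 ->]] /=.
by rewrite addnS; apply: hP h2 => //; [apply: leq_addr | apply: IH].
Qed.

End Runs.

(* Fix a time D, the value C of the counter at
   time D, and a node z at depth D + delta; the spine is the tree path
   spine 0, ..., spine delta = z hanging below depth D.  Labels below C are
   "old" (created before time D).  [reach st] is the deepest spine index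
   carrying an old label; the potential [Phi] built from it is a
   supermartingale. *)
Section Spine.
Variables (R : realType) (alpha beta : R) (V : eqType) (nbr : V -> seq V) (r : V)
          (p : V -> V) (rank : V -> nat).
Hypothesis ha : 0 <= alpha <= 1.
Hypothesis hb : 0 <= beta <= 1.
Hypothesis hund : undirected nbr.
Hypothesis hpr : p r = r.
Hypothesis hpn : forall v, v != r -> p v \in nbr v.
Hypothesis hex : forall y, exists n, iter n p y == r.

Local Notation dep := (depth hex).
Local Notation step := (step alpha beta nbr r p rank).
Local Notation run := (run alpha beta nbr r p rank).
Local Notation Inv := (Inv hex).

Variables (D C delta : nat) (z : V).
Hypothesis hz : dep z = (D + delta)%N.

Definition spine i := iter (delta - i) p z.

Lemma dep_spine i : (i <= delta)%N -> dep (spine i) = (D + i)%N.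
Proof. by move=> h; rewrite /spine (depth_iterp hpr) hz; lia. Qed.

Lemma p_spine i : (i < delta)%N -> p (spine i.+1) = spine i.
Proof.
move=> h; rewrite /spine; have -> : (delta - i = (delta - i.+1).+1)%N by lia.
by rewrite iterS.
Qed.

Lemma spine_nr i : (i < delta)%N -> spine i.+1 != r.
Proof. by move=> h; apply/eqP => e; have := dep_spine h; rewrite e depth_root; lia. Qed.

Definition Confined (st : state V) : Prop :=
  [/\ (C <= st.1.2)%N,
      (forall y a, (dep y <= D)%N -> st.1.1 y = Some a -> (a < C)%N) &
      (forall y y' a, st.1.1 y = Some a -> st.1.1 y' = Some a -> (C <= a)%N ->
          (D < dep y)%N /\ anc_at hex D.+1 y = anc_at hex D.+1 y')].

Lemma Confined0 st : Inv D st -> st.1.2 = C -> Confined st.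
Proof.
case=> _ _ _ hc hC; split.
- by rewrite hC.
- by move=> y a _ /hc; rewrite hC.
- by move=> y y' a /hc; rewrite hC => h _ /(leq_trans h); rewrite ltnn.
Qed.

Lemma Confined_step s st ws : (D <= s)%N -> Inv s st -> Confined st ->
  List.In ws (step st) -> Confined ws.2.
Proof.
move=> Ds hI [JC J1 J2] hin.
have [hc hch hv hfr] := step_char hI hin.
have [_ _ hD hc0] := hI.
split.
- exact: leq_trans JC hc.
- move=> y a dy; case: (hch y) => [->|[[yr ->]|[oy _]]].
  + exact: J1.
  + by apply: J1; apply: leq_trans dy; apply: depth_p_le.
  + by move: (hD y); rewrite oy /=; lia.
have src y a : ws.2.1.1 y = Some a -> (a < st.1.2)%N ->
    exists x, st.1.1 x = Some a /\ ((D < dep x)%N -> (D < dep y)%N /\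
                    anc_at hex D.+1 y = anc_at hex D.+1 x).
  move=> ha' hac; case: (hch y) => [e|[[yr e]|[oy [b [e cb]]]]].
  + by exists y; split => //; rewrite -e.
  + exists (p y); split; first by rewrite -e.
    move=> dpy; split; first by rewrite (depth_p hex yr); lia.
    by apply: anc_at_p.
  + by move: ha'; rewrite e => -[eb]; move: hac; rewrite -eb ltnNge cb.
move=> y y' a hy hy' Ca.
case: (ltnP a st.1.2) => ac; last first.
  have yy' := hfr _ _ _ hy hy' ac; subst y'; split => //.
  case: (hch y) => [e|[[yr e]|[oy _]]].
  + by move: (hc0 y a); rewrite -e hy => /(_ erefl); rewrite ltnNge ac.
  + by move: (hc0 (p y) a); rewrite -e hy => /(_ erefl); rewrite ltnNge ac.
  + by move: (hD y); rewrite oy /=; lia.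
have [x [hx1 hx2]] := src _ _ hy ac.
have [x' [hx1' hx2']] := src _ _ hy' ac.
have [dx ax] := J2 _ _ _ hx1 hx1' Ca.
have [dx' _] := J2 _ _ _ hx1' hx1 Ca.
have [dy ay] := hx2 dx; have [_ ay'] := hx2' dx'.
by split => //; rewrite ay ay' ax.
Qed.

Lemma shared_label_old st y y' a : Confined st ->
  st.1.1 y = Some a -> st.1.1 y' = Some a ->
  (forall x, anc p x y -> anc p x y' -> (dep x <= D)%N) -> (a < C)%N.
Proof.
move=> [_ _ J2] hy hy' hca; rewrite ltnNge; apply/negP => Ca.
have [dy ea] := J2 _ _ _ hy hy' Ca.
have [dy' _] := J2 _ _ _ hy' hy Ca.
have ay : anc p (anc_at hex D.+1 y) y by exists (dep y - D.+1)%N.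
have ay' : anc p (anc_at hex D.+1 y) y' by rewrite ea; exists (dep y' - D.+1)%N.
by have := hca _ ay ay'; rewrite depth_anc_at // ltnn.
Qed.

Definition old_at (st : state V) (i : nat) : bool :=
  (i <= delta)%N && (if st.1.1 (spine i) is Some a then (a < C)%N else false).

(* The deepest spine index carrying an old label (0 if there is none). *)
Definition reach (st : state V) : nat := \max_(i < delta.+1 | old_at st i) (i : nat).

Lemma reach_ge st i : old_at st i -> (i <= reach st)%N.
Proof.
move=> g; have hi : (i < delta.+1)%N by case/andP: g.
exact: (@leq_bigmax_cond _ (fun j : 'I_delta.+1 => old_at st j) (fun j => j : nat) (Ordinal hi)).
Qed.

Lemma reach_le st : (reach st <= delta)%N.
Proof. by apply/bigmax_leqP => i _; rewrite -ltnS. Qed.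

Lemma reach_old st : old_at st 0 -> old_at st (reach st).
Proof.
move=> g0.
have : (0 < #|[pred j : 'I_delta.+1 | old_at st j]|)%N by apply/card_gt0P; exists ord0.
case/(eq_bigmax_cond (fun j : 'I_delta.+1 => j : nat)) => i0 hin heq.
by have -> : reach st = i0 by exact: heq.
Qed.

Lemma old_at0 s st : (D <= s)%N -> Inv s st -> Confined st -> old_at st 0.
Proof.
move=> Ds [_ _ hD _] [_ J1 _]; rewrite /old_at /=.
have d0 : dep (spine 0) = D by rewrite dep_spine // addn0.
case e: (st.1.1 (spine 0)) => [a|]; first by apply: J1 e; rewrite d0.
by move: (hD (spine 0)); rewrite e d0 Ds.
Qed.

Lemma old_at_le s st i : Inv s st -> old_at st i -> (D + i <= s)%N.
Proof.
case=> _ _ hD _ /andP[id]; rewrite -(dep_spine id) -hD.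
by case: (st.1.1 (spine i)).
Qed.

Lemma reach_le_time s st : (D <= s)%N -> Inv s st -> Confined st -> (reach st <= s - D)%N.
Proof. by move=> Ds hI hJ; have := old_at_le hI (reach_old (old_at0 Ds hI hJ)); lia. Qed.

Lemma old_at_step s st ws j : (D <= s)%N -> Inv s st -> Confined st ->
  List.In ws (step st) -> old_at ws.2 j ->
  (j <= reach st)%N \/ (j = (reach st).+1 /\ ws.2.1.1 (spine j) = st.1.1 (spine (reach st))).
Proof.
move=> Ds hI [JC _ _] hin /andP[jd gj].
have [hc hch _ _] := step_char hI hin.
move: gj; case e: (ws.2.1.1 (spine j)) => [a|] // aC.
case: (hch (spine j)) => [e'|[[yr e']|[_ [b [e' cb]]]]].
- by left; apply: reach_ge; rewrite /old_at jd -e' e.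
- case: j jd e e' yr => [|j] jd e e' yr; first by left.
  rewrite p_spine // in e'.
  have gj : old_at st j by rewrite /old_at ltnW // -e' e.
  have := reach_ge gj; rewrite leq_eqVlt => /orP[/eqP hj|hj]; last by left.
  by right; rewrite -hj -e' e.
- by move: e; rewrite e' => -[eb]; move: aC; rewrite -eb ltnNge (leq_trans JC cb).
Qed.

Definition advanced (st st' : state V) : bool :=
  (reach st < delta)%N && (st'.1.1 (spine (reach st).+1) == st.1.1 (spine (reach st))).

(* The spine node below the reach is empty exactly at the frontier
   (reach = s - D), so it advances with probability at most 1 - alpha there
   and at most beta behind the frontier. *)
Lemma advance_prob_le s st : (D <= s)%N -> Inv s st -> Confined st ->
  Ex (step st) (fun st' => if advanced st st' then 1 else 0)
  <= (if reach st == (s - D)%N then 1 - alpha else beta).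
Proof.
move=> Ds; case: st => [[o c] Sl] hI hJ.
have /andP[a0 a1] := ha; have /andP[b0 b1] := hb.
have gh := reach_old (old_at0 Ds hI hJ).
have hle := old_at_le hI gh.
rewrite /advanced; set h := reach _ in gh hle *.
case: (ltnP h delta) => hd; last first.
  rewrite (@Ex_eq _ _ _ _ (fun _ => 0)) // /Ex big1 => [|ws _]; last by rewrite mulr0.
  by case: ifP; rewrite ?subr_ge0.
have pz : p (spine h.+1) = spine h by rewrite p_spine.
have [hu hS hD hc0] := hI.
rewrite Ex_step /= (@Ex_eq _ _ _ _
  (fun x => if x.1 (spine h.+1) == o (p (spine h.+1)) then 1 else 0)); last first.
  by move=> ws _ /=; rewrite pz.
have dz : dep (spine h.+1) = (D + h.+1)%N by rewrite dep_spine.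
have ozh : (o (spine h.+1) == None) = (h == (s - D)%N).
  apply/idP/idP.
    by move=> /eqP oz; move: (hD (spine h.+1)) => /=; rewrite oz dz /=; lia.
  move=> /eqP hs; move: (hD (spine h.+1)) => /=; rewrite dz hs => e.
  by apply/negPn; rewrite e; lia.
have zL : spine h.+1 \in stepL nbr r p rank o Sl.
  rewrite /stepL mem_cat mem_filter.
  case: (boolP (o (spine h.+1) == None)) => oz.
    rewrite (newborns_depth rank hund hpn _ hI) dz; move: oz; rewrite ozh => /eqP ->.
    by apply/orP; left; apply/eqP; lia.
  by rewrite hS oz spine_nr // orbT.
have ho : o (spine h.+1) != o (p (spine h.+1)).
  rewrite pz; move: gh; rewrite /old_at /=; case e: (o (spine h)) => [b|]; last by rewrite andbF.
  move=> /andP[_ bC]; apply/eqP => ez.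
  have gz : old_at (o, c, Sl) h.+1 by rewrite /old_at hd /= ez.
  by have := reach_ge gz; rewrite -/h ltnn.
rewrite -ozh.
exact: (proc_copy ha hb (stepL_uniq nbr rank hI) zL ho hc0).
Qed.

Lemma run_invariants k st0 ws : Inv D st0 -> st0.1.2 = C ->
  List.In ws (run k st0) -> Inv (D + k) ws.2 /\ Confined ws.2.
Proof.
move=> hI hC hin.
have preserved s st ws' : (D <= s)%N -> Inv s st /\ Confined st ->
    List.In ws' (step st) -> Inv s.+1 ws'.2 /\ Confined ws'.2.
  move=> Ds [h1 h2] hin'; split; first exact: (step_inv hund hpr hpn h1 hin').
  exact: Confined_step Ds h1 h2 hin'.
exact: run_inv preserved (conj hI (Confined0 hI hC)) hin.
Qed.

(* With lam >= 1 and mu satisfying the two drift conditions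
   below, lam ^ reach / mu ^ k (doubled at the frontier reach = k) decreases in
   expectation along the process, k being the time elapsed since D. *)
Variables (lam mu : R).
Hypothesis hlam : 1 <= lam.
Hypothesis hmu : 0 < mu.
Hypothesis behind_drift : 1 + (lam - 1) * beta <= mu.
Hypothesis frontier_drift : 1 + (2 * lam - 1) * (1 - alpha) <= 2 * mu.

Definition front (h k : nat) : R := if h == k then 2 else 1.

Lemma front_ge1 h k : 1 <= front h k.
Proof. by rewrite /front; case: ifP => _; rewrite ?lexx ?ler1n. Qed.

Definition Phi (k : nat) (st : state V) : R :=
  lam ^+ reach st / mu ^+ k * front (reach st) k.

Lemma Phi_ge0 k st : 0 <= Phi k st.
Proof.
have l0 : 0 <= lam by apply: le_trans hlam.
rewrite /Phi; apply: mulr_ge0; last exact: le_trans ler01 (front_ge1 _ _).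
by apply: divr_ge0; [apply: exprn_ge0 | apply: exprn_ge0; apply: ltW].
Qed.

Lemma Phi_step_pointwise s st ws : (D <= s)%N -> Inv s st -> Confined st ->
  List.In ws (step st) ->
  Phi (s - D).+1 ws.2 <= lam ^+ reach st / mu ^+ (s - D).+1 *
    (1 + (lam * front (reach st) (s - D) - 1) * (if advanced st ws.2 then 1 else 0)).
Proof.
move=> Ds hI hJ hin.
have l0 : 0 <= lam by apply: le_trans hlam.
have lF : 0 <= lam * front (reach st) (s - D) - 1.
  by rewrite subr_ge0 mulr_ege1 ?front_ge1.
have hk := reach_le_time Ds hI hJ.
set k := (s - D)%N in hk *; set h := reach st in hk *.
set A := lam ^+ h / mu ^+ k.+1.
have A0 : 0 <= A by apply: divr_ge0; [apply: exprn_ge0 | apply: exprn_ge0; apply: ltW].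
have hI' := step_inv hund hpr hpn hI hin.
have hJ' := Confined_step Ds hI hJ hin.
have gh' := reach_old (old_at0 (leqW Ds) hI' hJ').
case: (old_at_step Ds hI hJ hin gh') => [hle|[he hv]].
  rewrite /Phi /front ltn_eqF ?ltnS ?(leq_trans hle hk) // mulr1.
  apply: le_trans (_ : A * 1 <= _); last first.
    by apply: ler_wpM2l => //; rewrite lerDl; apply: mulr_ge0 => //; case: ifP.
  rewrite mulr1 /A; apply: ler_wpM2r; first by rewrite invr_ge0; apply: exprn_ge0; apply: ltW.
  exact: ler_weXn2l.
have hd : (h < delta)%N by have := reach_le ws.2; rewrite he.
have -> : advanced st ws.2 by rewrite /advanced hd /= -he hv.
rewrite mulr1 addrC subrK /Phi he /front eqSS /A exprS -/h le_eqVlt; apply/orP; left.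
by apply/eqP; ring.
Qed.

Lemma Phi_step s st : (D <= s)%N -> Inv s st -> Confined st ->
  Ex (step st) (Phi (s - D).+1) <= Phi (s - D) st.
Proof.
move=> Ds hI hJ.
have /andP[a0 a1] := ha; have /andP[b0 b1] := hb.
have l0 : 0 <= lam by apply: le_trans hlam.
have lF : 0 <= lam * front (reach st) (s - D) - 1.
  by rewrite subr_ge0 mulr_ege1 ?front_ge1.
set k := (s - D)%N; set h := reach st; set F := front h k.
set A : R := lam ^+ h / mu ^+ k.+1.
have A0 : 0 <= A by apply: divr_ge0; [apply: exprn_ge0 | apply: exprn_ge0; apply: ltW].
apply: le_trans (_ : Ex (step st)
  (fun st' => A * (1 + (lam * F - 1) * (if advanced st st' then 1 else 0))) <= _).
  apply: Ex_le => [ws hin|ws hin]; first by have := step_ge0 ha hb hin.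
  exact: Phi_step_pointwise.
rewrite ExZ Ex_affine step_sum1 mul1r.
apply: le_trans (_ : A * (1 + (lam * F - 1) * (if h == k then 1 - alpha else beta)) <= _).
  by apply: ler_wpM2l => //; rewrite lerD2l; apply: ler_wpM2l => //; apply: advance_prob_le.
have drift : 1 + (lam * F - 1) * (if h == k then 1 - alpha else beta) <= mu * F.
  by rewrite /F /front; case: ifP => _; [rewrite [lam * 2]mulrC [mu * 2]mulrC | rewrite !mulr1].
have -> : Phi k st = A * (mu * F).
  by rewrite /Phi -/h -/F /A exprS; field; rewrite expf_neq0 gt_eqF.
exact: ler_wpM2l.
Qed.

Lemma Phi_run k st0 : Inv D st0 -> st0.1.2 = C -> Ex (run k st0) (Phi k) <= Phi 0 st0.
Proof.
move=> hI hC; elim: k => [|k IH]; first by rewrite Ex1.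
rewrite Ex_run_S; apply: le_trans IH.
apply: Ex_le => [ws hin|ws hin]; first by have := run_ge0 ha hb hin.
have [h1 h2] := run_invariants hI hC hin.
by have := Phi_step (leq_addr k D) h1 h2; rewrite addKn.
Qed.

(* At time D the reach is 0, at the frontier. *)
Lemma Phi0_le st0 : Inv D st0 -> st0.1.2 = C -> Phi 0 st0 <= 2.
Proof.
move=> hI hC; have := reach_le_time (leqnn D) hI (Confined0 hI hC).
by rewrite subnn leqn0 => /eqP h0; rewrite /Phi /front h0 !expr0 divr1 mul1r.
Qed.

Lemma reach_end_prob m st0 (E : state V -> bool) :
  Inv D st0 -> st0.1.2 = C ->
  (forall st, Inv (D + m) st -> Confined st -> E st -> old_at st delta) ->
  Ex (run m st0) (fun st => if E st then 1 else 0) <= 2 * mu ^+ m / lam ^+ delta.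
Proof.
move=> hI hC hE.
have lpos : 0 < lam ^+ delta by apply: exprn_gt0; apply: lt_le_trans hlam.
have mpos : 0 < mu ^+ m by apply: exprn_gt0.
have M0 : 0 <= mu ^+ m / lam ^+ delta by apply: divr_ge0; apply: ltW.
apply: le_trans (_ : Ex (run m st0) (fun st => mu ^+ m / lam ^+ delta * Phi m st) <= _).
  apply: Ex_le => [ws hin|ws hin]; first by have := run_ge0 ha hb hin.
  have [h1 h2] := run_invariants hI hC hin.
  case: ifP => hEw; last exact: mulr_ge0 M0 (Phi_ge0 _ _).
  rewrite /Phi mulrA.
  have -> : reach ws.2 = delta.
    by apply/eqP; rewrite eqn_leq reach_le reach_ge // hE.
  have -> : mu ^+ m / lam ^+ delta * (lam ^+ delta / mu ^+ m) = 1.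
    by field; rewrite !gt_eqF.
  by rewrite mul1r front_ge1.
rewrite ExZ -[X in _ <= X]mulrA [X in _ <= X]mulrC ler_wpM2l //.
exact: le_trans (Phi_run m hI hC) (Phi0_le hI hC).
Qed.

End Spine.

(* For 0 < eps <= 1/2 we take
   lam = 1 / (1 - eps) and mu = 1 + beta (lam - 1); the bound of
   [reach_end_prob] then decays like exp (beta m eps - delta eps), and
   eps = alpha / (4 sqrt m) makes this at most exp (- m ^ c). *)
Section DriftParameters.
Variable R : realType.
Implicit Types alpha beta eps : R.

Definition lam_of eps : R := (1 - eps)^-1.
Definition mu_of beta eps : R := 1 + beta * (lam_of eps - 1).

Lemma lam_ofB1 eps : eps < 1 -> lam_of eps - 1 = eps / (1 - eps).
Proof. by move=> e1; rewrite /lam_of; field; rewrite subr_eq0 gt_eqF. Qed.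

(* lam - 1 = eps + eps^2 + ... is at most eps + 2 eps^2. *)
Lemma lam_ofB1_le eps : 0 <= eps <= 2^-1 -> lam_of eps - 1 <= eps + 2 * eps ^+ 2.
Proof.
case/andP=> e0 e2; rewrite lam_ofB1; last by apply: le_lt_trans e2 _; lra.
rewrite ler_pdivrMr; last lra.
have : 0 <= eps ^+ 2 * (1 - 2 * eps) by apply: mulr_ge0; [apply: sqr_ge0|lra].
by rewrite expr2; nra.
Qed.

(* The two drift conditions required by the potential [Phi]; the frontier
   condition needs lam - 1 <= 2 eps <= alpha / 2. *)
Lemma drift_conditions alpha beta eps :
  0 <= alpha -> 0 <= beta <= 1 -> 0 < eps -> 4 * eps <= alpha -> alpha <= 1 ->
  [/\ 1 <= lam_of eps, 0 < mu_of beta eps,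
      1 + (lam_of eps - 1) * beta <= mu_of beta eps &
      1 + (2 * lam_of eps - 1) * (1 - alpha) <= 2 * mu_of beta eps].
Proof.
move=> a0 /andP[b0 b1] e0 ea a1.
have e2 : eps <= 2^-1 by lra.
have d0 : 0 <= lam_of eps - 1.
  by rewrite lam_ofB1; [apply: divr_ge0; lra | lra].
have d2 : lam_of eps - 1 <= 2 * eps.
  apply: le_trans (lam_ofB1_le _) _; first by apply/andP; split; lra.
  by rewrite expr2; nra.
split; rewrite /mu_of.
- lra.
- by apply: lt_le_trans (ltr01) _; rewrite lerDl; apply: mulr_ge0.
- by rewrite mulrC.
- set d := lam_of eps - 1 in d0 d2 *.
  have -> : lam_of eps = 1 + d by rewrite /d; ring.
  nra.
Qed.

Lemma drift_tail beta eps (m delta : nat) :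
  0 <= beta <= 1 -> 0 < eps <= 2^-1 ->
  2 * mu_of beta eps ^+ m / lam_of eps ^+ delta
  <= expR (1 + m%:R * beta * (eps + 2 * eps ^+ 2) - delta%:R * eps).
Proof.
move=> /andP[b0 b1] /andP[e0 e2].
have d0 : 0 <= lam_of eps - 1 by rewrite lam_ofB1; [apply: divr_ge0; lra | lra].
have dle := lam_ofB1_le (eps := eps).
have mu0 : 0 <= mu_of beta eps by rewrite /mu_of; apply: addr_ge0 => //; apply: mulr_ge0.
have hmu : mu_of beta eps ^+ m <= expR (m%:R * (beta * (lam_of eps - 1))).
  by rewrite expRM_natl; apply: lerXn2r; rewrite ?nnegrE ?expR_ge0 // expR_ge1Dx.
have hlam : (lam_of eps ^+ delta)^-1 <= expR (delta%:R * (- eps)).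
  rewrite /lam_of -exprVn invrK expRM_natl; apply: lerXn2r; rewrite ?nnegrE ?expR_ge0 //.
    lra.
  exact: expR_ge1Dx.
have h2 : (2 : R) <= expR 1 by have := expR_ge1Dx (1 : R); lra.
apply: le_trans (_ : expR 1 * (expR (m%:R * (beta * (lam_of eps - 1))) *
                     expR (delta%:R * - eps)) <= _).
  rewrite -mulrA; apply: ler_pM => //.
  - apply: mulr_ge0; first exact: exprn_ge0.
    by rewrite invr_ge0 exprn_ge0 // /lam_of invr_ge0; lra.
  - apply: ler_pM => //; first exact: exprn_ge0.
    by rewrite invr_ge0 exprn_ge0 // /lam_of invr_ge0; lra.
rewrite -!expRD ler_expR.
have : m%:R * (beta * (lam_of eps - 1)) <= m%:R * beta * (eps + 2 * eps ^+ 2).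
  rewrite mulrA ler_wpM2l ?mulr_ge0 //.
  by apply: dle; apply/andP; split; lra.
lra.
Qed.

Lemma drift_parameters alpha beta c (m delta : nat) :
  0 < alpha < 1 -> 0 < beta < 1 -> 0 < c -> (1 <= m)%N ->
  beta * m%:R + (12 / alpha) * powR m%:R (2^-1 + c) < delta%:R ->
  exists lam mu : R, [/\ 1 <= lam, 0 < mu, 1 + (lam - 1) * beta <= mu,
     1 + (2 * lam - 1) * (1 - alpha) <= 2 * mu &
     2 * mu ^+ m / lam ^+ delta <= expR (- (1 * powR m%:R c))].
Proof.
move=> /andP[a0 a1] /andP[b0 b1] c0 m1 hyp.
set X : R := m%:R; set sq := Num.sqrt X; set Y := powR X c.
have X1 : 1 <= X by rewrite /X ler1n.
have sq1 : 1 <= sq by rewrite -sqrtr1 ler_sqrt.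
have sq2 : sq ^+ 2 = X by apply: sqr_sqrtr; lra.
have Y1 : 1 <= Y by rewrite /Y -(powRr0 X); apply: ler_powR => //; lra.
set eps := alpha / 4 / sq.
have e0 : 0 < eps by apply: divr_gt0; lra.
have e4 : 4 * eps <= alpha.
  have : eps <= alpha / 4 by rewrite /eps ler_pdivrMr ?ler_peMr //; lra.
  lra.
have Xe2 : X * eps ^+ 2 = (alpha / 4) ^+ 2.
  by rewrite /eps expr_div_n sq2 mulrC divfK // gt_eqF //; lra.
have hpow : powR X (2^-1 + c) = sq * Y.
  rewrite powRD; last by apply/implyP => _; rewrite gt_eqF //; lra.
  by rewrite powR12_sqrt //; lra.
have heps : 12 / alpha * (sq * Y) * eps = 3 * Y.
  by rewrite /eps; field; rewrite !gt_eqF //; lra.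
have hb : 0 <= beta <= 1 by apply/andP; split; apply: ltW.
have [l1 mu0 hoff hfront] := drift_conditions (ltW a0) hb e0 e4 (ltW a1).
exists (lam_of eps), (mu_of beta eps); split => //.
have e2 : 0 < eps <= 2^-1 by rewrite e0 /=; lra.
apply: le_trans (drift_tail m delta hb e2) _.
rewrite ler_expR mul1r -/X.
have hdel : beta * X * eps + 3 * Y < delta%:R * eps.
  by rewrite -heps -mulrDl ltr_pM2r // -hpow.
have h2 : X * beta * (eps + 2 * eps ^+ 2) <= beta * X * eps + 2 * (alpha / 4) ^+ 2.
  rewrite mulrDr -Xe2; have : 0 <= X * eps ^+ 2 by rewrite Xe2 sqr_ge0.
  by nra.
have : (alpha / 4) ^+ 2 <= 1 / 16 by rewrite expr2; nra.
lra.
Qed.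

End DriftParameters.

Lemma gdist_uniq (V : eqType) (nbr : V -> seq V) r v n n' :
  gdist nbr r v n -> gdist nbr r v n' -> n = n'.
Proof.
case=> [[s [hs hl hz]] hm] [[s' [hs' hl' hz']] hm'].
apply/eqP; rewrite eqn_leq; apply/andP; split.
  by rewrite -hz'; apply: hm.
by rewrite -hz; apply: hm'.
Qed.

Section BfsTree.
Variables (V : eqType) (nbr : V -> seq V) (r : V) (p : V -> V).
Hypothesis hbfs : bfs_tree nbr r p.

Lemma bfs_reaches_root y : exists n, iter n p y == r.
Proof. by have [_ _ /(_ y) [n [[h _] _]]] := hbfs; exists n; apply/eqP. Qed.

Let hex := bfs_reaches_root.

Lemma bfs_depth_le y t : (exists2 n, gdist nbr r y n & (n <= t)%N) -> (depth hex y <= t)%N.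
Proof.
case=> n g nt; have [_ _ /(_ y) [n' [td gd]]] := hbfs.
by rewrite -(tdist_depth hex td) (gdist_uniq gd g).
Qed.

Lemma spine_within_horizon t u v w D du dv :
  (exists2 n, gdist nbr r u n & (n <= t)%N) -> (exists2 n, gdist nbr r v n & (n <= t)%N) ->
  tdist p r w D -> tdist p w u du -> tdist p w v dv -> (D + maxn du dv <= t)%N.
Proof.
have [hpr _ _] := hbfs.
move=> /bfs_depth_le hu /bfs_depth_le hv /(tdist_depth hex) -> hdu hdv.
have [dpu _] := tdist_anc hpr hex hdu; have [dpv _] := tdist_anc hpr hex hdv.
by rewrite addn_maxr geq_max -dpu -dpv hu hv.
Qed.

Lemma lca_common_ancestors u v w D x : is_lca r p u v w -> tdist p r w D ->
  anc p x u -> anc p x v -> (depth hex x <= D)%N.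
Proof. by case=> _ _ hmax hwD hu hv; apply: hmax hu hv (tdist_depthP hex x) hwD. Qed.

End BfsTree.

Section SharedOrigin.
Variables (R : realType) (alpha beta : R) (V : eqType) (nbr : V -> seq V) (r : V)
          (p : V -> V) (rank : V -> nat).
Hypothesis ha : 0 <= alpha <= 1.
Hypothesis hb : 0 <= beta <= 1.
Hypothesis hund : undirected nbr.
Hypothesis hbfs : bfs_tree nbr r p.
Variables (lam mu : R).
Hypothesis hlam : 1 <= lam.
Hypothesis hmu : 0 < mu.
Hypothesis behind_drift : 1 + (lam - 1) * beta <= mu.
Hypothesis frontier_drift : 1 + (2 * lam - 1) * (1 - alpha) <= 2 * mu.

Let hex := bfs_reaches_root hbfs.

Lemma prob_indicator t (E : state V -> bool) :
  prob alpha beta nbr r p rank t E =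
  Ex (run alpha beta nbr r p rank t (init_state r)) (fun st => if E st then 1 else 0).
Proof.
by rewrite -dist_run /prob /Ex; apply: eq_bigr => ws _; case: ifP; rewrite ?mulr1 ?mulr0.
Qed.

Lemma run_init_Inv k ws : List.In ws (run alpha beta nbr r p rank k (init_state r)) ->
  Inv hex k ws.2.
Proof.
have [hpr hpn _] := hbfs.
move=> hin; have := run_inv (P := Inv hex) _ (Inv0 hex) hin; rewrite add0n; apply.
by move=> s st ws' _ hI hin'; have := step_inv hund hpr hpn hI hin'.
Qed.

Lemma same_origin_prob_le t u v w D du dv :
  (exists2 n, gdist nbr r u n & (n <= t)%N) -> (exists2 n, gdist nbr r v n & (n <= t)%N) ->
  is_lca r p u v w -> tdist p r w D -> tdist p w u du -> tdist p w v dv ->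
  prob alpha beta nbr r p rank t (fun st => origin st u == origin st v)
  <= 2 * mu ^+ (t - D) / lam ^+ maxn du dv.
Proof.
move=> hu hv hlca hwD hdu hdv.
have [hpr hpn _] := hbfs.
have hDt := spine_within_horizon hbfs hu hv hwD hdu hdv.
have Dt : (D <= t)%N := leq_trans (leq_addr _ _) hDt.
have [dpu _] := tdist_anc hpr hex hdu; have [dpv _] := tdist_anc hpr hex hdv.
rewrite -(tdist_depth hex hwD) in dpu dpv.
(* the deeper endpoint z ends the spine below w *)
pose z := if (du <= dv)%N then v else u.
have hz : depth hex z = (D + maxn du dv)%N.
  by rewrite /z; case: leqP => _; rewrite ?dpu ?dpv.
rewrite prob_indicator -(subnKC Dt) Ex_run_add addKn.
apply: le_trans (_ : Ex (run alpha beta nbr r p rank D (init_state r))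
                        (fun _ => 2 * mu ^+ (t - D) / lam ^+ maxn du dv) <= _); last first.
  by rewrite Ex_const run_sum1 mulr1.
apply: Ex_le => [ws hin|ws hin]; first by have := run_ge0 ha hb hin.
apply: (reach_end_prob rank ha hb hund hpr hpn hz hlam hmu behind_drift frontier_drift
          (run_init_Inv hin) erefl).
(* a shared origin at time t is an old label which has reached z *)
move=> st [_ _ hlab _] hJ /eqP hE.
have [a eu] : exists a, st.1.1 u = Some a.
  by case e: (st.1.1 u) => [a|]; [exists a | move: (hlab u); rewrite e (subnKC Dt) (bfs_depth_le hbfs hu)].
have ev : st.1.1 v = Some a by rewrite -eu.
have aC := shared_label_old hpr hJ eu ev (fun x => lca_common_ancestors hbfs hlca hwD (x := x)).
by rewrite /old_at leqnn /spine subnn /= (_ : st.1.1 z = Some a) // /z; case: leqP.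
Qed.

End SharedOrigin.

(* If the time horizon m were 0, the hypothesis on delta would read 0 < 0. *)
Lemma horizon_pos (R : realType) (beta K e : R) (m delta : nat) :
  0 < e -> (delta <= m)%N -> beta * m%:R + K * powR m%:R e < delta%:R -> (0 < m)%N.
Proof.
move=> e0; case: m => // /[!leqn0] /eqP ->.
by rewrite powR0 ?gt_eqF // !mulr0 addr0 ltxx.
Qed.

Theorem mainTheorem13 (R : realType) (alpha beta c : R) :
  0 < alpha < 1 -> 0 < beta < 1 -> 0 < c ->
  exists K c1 c2 : R, [/\ 0 < K, 0 < c1, 0 < c2 &
    forall (V : eqType) (nbr : V -> seq V) (r : V) (p : V -> V)
           (rank : V -> nat),
      undirected nbr -> bfs_tree nbr r p -> injective rank ->
      forall (t : nat), (0 < t)%N ->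
      forall (u v w : V) (D delta du dv : nat),
        (exists2 n, gdist nbr r u n & (n <= t)%N) ->
        (exists2 n, gdist nbr r v n & (n <= t)%N) ->
        is_lca r p u v w ->
        tdist p r w D ->
        tdist p w u du -> tdist p w v dv -> delta = maxn du dv ->
        beta * (t - D)%N%:R + K * powR (t - D)%N%:R (2^-1 + c) < delta%:R ->
        prob alpha beta nbr r p rank t
             (fun st => origin st u == origin st v)
        <= expR (- (c1 * powR (t - D)%N%:R c2))].
Proof.
move=> ha hb hc; have /andP[a0 a1] := ha; have /andP[b0 b1] := hb.
exists (12 / alpha), 1, c; split => //; first exact: divr_gt0.
move=> V nbr r p rank hund hbfs _ t _ u v w D delta du dv hu hv hlca hwD hdu hdv -> hyp.
have hm : (maxn du dv <= t - D)%N.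
  by have := spine_within_horizon hbfs hu hv hwD hdu hdv; lia.
have hc' : 0 < 2^-1 + c by rewrite addr_gt0 // invr_gt0.
have [lam [mu [hlam hmu behind frontier tail]]] :=
  drift_parameters ha hb hc (horizon_pos hc' hm hyp) hyp.
apply: le_trans tail.
have ha' : 0 <= alpha <= 1 by rewrite !ltW.
have hb' : 0 <= beta <= 1 by rewrite !ltW.
by have := same_origin_prob_le rank ha' hb' hund hbfs hlam hmu behind frontier hu hv hlca hwD hdu hdv.
Qed.
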